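(* Let $R=\bigoplus_{\alpha\in\Gamma}R_{\alpha}$ be an integrally closed graded integral domain. Then $R$ is a graded-Prüfer domain if and only if every nonzero finitely generated homogeneous ideal of $R$ is a $v$-ideal.
   Context: $\Gamma$ is a commutative cancellative monoid (written additively) whose quotient group $\langle\Gamma\rangle$ is torsion-free. A graded integral domain $R=\bigoplus_{\alpha\in\Gamma}R_\alpha$ is an integral domain that is the direct sum of additive subgroups $R_\alpha$ with $R_\alpha R_\beta\subseteq R_{\alpha+\beta}$, with quotient field $K$. An ideal $I$ is homogeneous if $I=\bigoplus_\alpha(I\cap R_\alpha)$. $R$ is a graded-Prüfer domain if every nonzero finitely generated homogeneous ideal of $R$ is invertible. An ideal $I$ is a $v$-ideal if $I=(R:(R:I))$, where $(R:E)=\{x\in K: xE\subseteq R\}$. *)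

From HB Require Import structures.
From mathcomp Require Import all_boot all_order all_algebra.
From mathcomp Require Import fraction.
Set Implicit Arguments. Unset Strict Implicit. Unset Printing Implicit Defensive.
Import Order.TTheory GRing.Theory Num.Theory.
Local Open Scope ring_scope.

(* We require it to be
   cancellative and its quotient group <Gamma> to be torsion-free; for a
   cancellative monoid, <Gamma> is torsion-free iff n*a = n*b (n>0) forces a = b
   (the element a - b of <Gamma> has n(a-b) = 0). *)
Definition cancellative_monoid (G : nmodType) : Prop :=
  forall a b c : G, a + b = a + c -> b = c.

Definition torsionfree_quotient_group (G : nmodType) : Prop :=
  forall (n : nat) (a b : G), (0 < n)%N -> a *+ n = b *+ n -> a = b.

(* Rg a x  means  x \in R_a. *)
Definition is_grading (G : nmodType) (R : idomainType) (Rg : G -> R -> Prop) : Prop :=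
  [/\
      (forall a, Rg a 0),
      (forall a x y, Rg a x -> Rg a y -> Rg a (x - y)),
      (forall a b x y, Rg a x -> Rg b y -> Rg (a + b) (x * y)),
      (forall x : R, exists (s : seq G) (f : G -> R),
          uniq s /\ (forall a, Rg a (f a)) /\ x = \sum_(a <- s) f a) &
      (forall (s : seq G) (f : G -> R), uniq s -> (forall a, Rg a (f a)) ->
          \sum_(a <- s) f a = 0 -> forall a, a \in s -> f a = 0)].

Definition is_ideal (R : idomainType) (I : R -> Prop) : Prop :=
  [/\ I 0, (forall x y, I x -> I y -> I (x + y)) & (forall r x, I x -> I (r * x))].

Definition nonzero_ideal (R : idomainType) (I : R -> Prop) : Prop :=
  exists x, I x /\ x != 0.

Definition generated_by (R : idomainType) (I : R -> Prop) (s : seq R) : Prop :=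
  forall x, I x <-> exists c : 'I_(size s) -> R, x = \sum_(i < size s) c i * s`_i.

Definition finitely_generated (R : idomainType) (I : R -> Prop) : Prop :=
  exists s : seq R, generated_by I s.

(* I = (+)_a (I \cap R_a): every homogeneous component of an element of I lies in I *)
Definition homogeneous_ideal (G : nmodType) (R : idomainType) (Rg : G -> R -> Prop)
  (I : R -> Prop) : Prop :=
  is_ideal I /\
  forall (x : R) (s : seq G) (f : G -> R), I x -> uniq s -> (forall a, Rg a (f a)) ->
    x = \sum_(a <- s) f a -> forall a, a \in s -> I (f a).

Notation "x %:F" := (@FracField.tofrac _ x) : ring_scope.

Definition inR (R : idomainType) (x : {fraction R}) : Prop := exists r : R, x = r%:F.

Definition idealK (R : idomainType) (I : R -> Prop) : {fraction R} -> Prop :=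
  fun x => exists r, I r /\ x = r%:F.

Definition colon (R : idomainType) (E : {fraction R} -> Prop) : {fraction R} -> Prop :=
  fun x => forall y, E y -> inR (x * y).

Definition Rsubmodule (R : idomainType) (J : {fraction R} -> Prop) : Prop :=
  [/\ J 0, (forall x y, J x -> J y -> J (x + y)) & (forall r x, J x -> J (r%:F * x))].

Definition prodK (R : idomainType) (E F : {fraction R} -> Prop) : {fraction R} -> Prop :=
  fun z => exists (n : nat) (e f : 'I_n -> {fraction R}),
    (forall i, E (e i)) /\ (forall i, F (f i)) /\ z = \sum_(i < n) e i * f i.

Definition invertible (R : idomainType) (I : R -> Prop) : Prop :=
  exists J : {fraction R} -> Prop, Rsubmodule J /\
    forall z, prodK (idealK I) J z <-> inR z.

Definition v_ideal (R : idomainType) (I : R -> Prop) : Prop :=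
  forall z, idealK I z <-> colon (colon (idealK I)) z.

Definition graded_Prufer (G : nmodType) (R : idomainType) (Rg : G -> R -> Prop) : Prop :=
  forall I : R -> Prop, homogeneous_ideal Rg I -> nonzero_ideal I ->
    finitely_generated I -> invertible I.

Definition integrally_closed (R : idomainType) : Prop :=
  forall (x : {fraction R}) (p : {poly R}), p \is monic ->
    root (map_poly (fun r : R => r%:F) p) x -> inR x.

(* An invertible ideal is a v-ideal in any domain.  Conversely, let a, b be nonzero
   homogeneous elements.  For y in (R : (a^2, b^2)) we have (yab)^2 = (ya^2)(yb^2) in R,
   so yab is integral over R, hence in R; thus ab lies in the v-closure of the
   homogeneous ideal (a^2, b^2), which by hypothesis is (a^2, b^2) itself.  Writing
   ab = r a^2 + s b^2, the element y = ra/b is a root of X^2 - X + rs, so y and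
   sb/a = 1 - y lie in R, and r/b, s/a form a dual basis of (a, b): their products
   with a and b lie in R and (r/b) a + (s/a) b = 1.  Dual bases of pairs combine, by
   induction on the number of generators, into a dual basis of any nonzero ideal
   generated by finitely many homogeneous elements, which makes it invertible; and a
   finitely generated homogeneous ideal is generated by the homogeneous components of
   its generators. *)

From mathcomp Require Import all_boot all_order all_algebra.
From mathcomp Require Import fraction ring.
Set Implicit Arguments. Unset Strict Implicit. Unset Printing Implicit Defensive.
Import Order.TTheory GRing.Theory Num.Theory.
Local Open Scope ring_scope.

Section IntegralElements.
Variable R : idomainType.
Implicit Types x y : {fraction R}.

Lemma inR0 : inR (0 : {fraction R}). Proof. by exists 0; rewrite tofrac0. Qed.
Lemma inR1 : inR (1 : {fraction R}). Proof. by exists 1; rewrite tofrac1. Qed.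
Lemma inR_tofrac (a : R) : inR a%:F. Proof. by exists a. Qed.

Lemma inRD x y : inR x -> inR y -> inR (x + y).
Proof. by move=> [a ->] [b ->]; exists (a + b); rewrite tofracD. Qed.

Lemma inRN x : inR x -> inR (- x).
Proof. by move=> [a ->]; exists (- a); rewrite tofracN. Qed.

Lemma inRM x y : inR x -> inR y -> inR (x * y).
Proof. by move=> [a ->] [b ->]; exists (a * b); rewrite tofracM. Qed.

Lemma inR_sum I (r : seq I) (P : pred I) (F : I -> {fraction R}) :
  (forall i, P i -> inR (F i)) -> inR (\sum_(i <- r | P i) F i).
Proof. by move=> FR; apply: big_ind => //; [exact: inR0 | exact: inRD]. Qed.

Lemma integrally_closed_quadratic (w : {fraction R}) (b c : R) :
  integrally_closed R -> w ^+ 2 + b%:F * w + c%:F = 0 -> inR w.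
Proof.
move=> Hic root_w; apply: (Hic w ('X * ('X + b%:P) + c%:P)).
  rewrite monicE lead_coefDl; first by rewrite lead_coef_monicM ?monicX // lead_coefXaddC.
  rewrite size_monicM ?monicX ?monic_neq0 ?monicXaddC // size_polyX size_XaddC.
  exact: leq_ltn_trans (size_polyC_leq1 c) _.
apply/eqP; rewrite rmorphD rmorphM /= rmorphD /= map_polyX !map_polyC /= !hornerE -root_w.
by rewrite mulrDr -expr2 mulrC.
Qed.

End IntegralElements.

Section Ideals.
Variable R : idomainType.
Implicit Types (I : R -> Prop) (s : seq R).

Definition ideal_span s (x : R) : Prop :=
  exists c : 'I_(size s) -> R, x = \sum_(i < size s) c i * s`_i.

Lemma ideal_sum I J (r : seq J) (P : pred J) (F : J -> R) :
  is_ideal I -> (forall j, P j -> I (F j)) -> I (\sum_(j <- r | P j) F j).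
Proof. by case=> I0 ID _ FI; apply: big_ind. Qed.

Lemma ideal_span_ideal s : is_ideal (ideal_span s).
Proof.
split.
- by exists (fun=> 0); rewrite big1 // => i _; rewrite mul0r.
- move=> _ _ [c ->] [d ->]; exists (fun i => c i + d i).
  by rewrite -big_split; apply: eq_bigr => i _; rewrite mulrDl.
- move=> r _ [c ->]; exists (fun i => r * c i).
  by rewrite mulr_sumr; apply: eq_bigr => i _; rewrite mulrA.
Qed.

Lemma ideal_span_mem s x : x \in s -> ideal_span s x.
Proof.
move=> xs; pose ix := Ordinal (etrans (index_mem x s) xs).
exists (fun i => (i == ix)%:R).
rewrite (bigD1 ix) //= eqxx mul1r nth_index // big1 ?addr0 // => i /negbTE ->.
exact: mul0r.
Qed.

Lemma ideal_span_min I s x :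
  is_ideal I -> (forall y, y \in s -> I y) -> ideal_span s x -> I x.
Proof.
move=> Iid sI [c ->]; apply: ideal_sum => // i _.
by case: Iid => _ _; apply; apply/sI/mem_nth.
Qed.

Lemma ideal_span_nil x : ideal_span [::] x -> x = 0.
Proof. by case=> c ->; rewrite big_ord0. Qed.

Lemma ideal_span_pair a b x :
  ideal_span [:: a; b] x -> exists r t, x = r * a + t * b.
Proof.
by case=> c ->; exists (c ord0), (c (lift ord0 ord0)); rewrite !big_ord_recl big_ord0 addr0.
Qed.

Lemma colon_Rsubmodule (E : {fraction R} -> Prop) : Rsubmodule (colon E).
Proof.
split.
- by move=> y _; rewrite mul0r; exact: inR0.
- by move=> x y Ex Ey z Ez; rewrite mulrDl; apply: inRD; [exact: Ex | exact: Ey].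
- by move=> r x Ex z Ez; rewrite -mulrA; apply: inRM; [exact: inR_tofrac | exact: Ex].
Qed.

Lemma invertible_v_ideal I : is_ideal I -> invertible I -> v_ideal I.
Proof.
move=> [I0 ID IM] [J [_ IJ_R]] z; split.
  by move=> Iz x colon_x; rewrite mulrC; exact: colon_x.
move=> Iz.
have [n [e [f [Ie [Jf sum_ef]]]]] := (IJ_R 1).2 (inR1 R).
have colon_f i : colon (idealK I) (f i).
  move=> y Iy; apply/IJ_R; exists 1%N, (fun=> y), (fun=> f i).
  by do 2!split=> //; rewrite big_ord1 mulrC.
rewrite -[z]mulr1 sum_ef mulr_sumr.
apply: big_ind => [||i _].
- by exists 0; rewrite tofrac0.
- move=> _ _ [a [Ia ->]] [b [Ib ->]].
  by exists (a + b); rewrite tofracD; split; first exact: ID.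
have [a [Ia ->]] := Ie i; have [r Er] := Iz _ (colon_f i).
by exists (r * a); split; [exact: IM | rewrite mulrCA Er -tofracM mulrC].
Qed.

End Ideals.

Section DualBases.
Variable R : idomainType.

Definition dual_basis (H : seq R) (u : nat -> {fraction R}) : Prop :=
  \sum_(i < size H) u i * (H`_i)%:F = 1 /\
  forall i, (i < size H)%N -> forall h, h \in H -> inR (u i * h%:F).

Lemma invertible_of_dual_basis (I : R -> Prop) H u :
  generated_by I H -> dual_basis H u -> invertible I.
Proof.
move=> IH [sum_uH uH_R].
have u_colon i : (i < size H)%N -> colon (idealK I) (u i).
  move=> lt_i_H _ [x [/IH [c ->] ->]].
  rewrite rmorph_sum mulr_sumr; apply: inR_sum => j _.
  rewrite rmorphM /= mulrCA; apply: inRM; first exact: inR_tofrac.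
  exact/uH_R/mem_nth.
exists (colon (idealK I)); split; first exact: colon_Rsubmodule.
move=> z; split.
  case=> n [e [f [Ie [colon_f ->]]]]; apply: inR_sum => i _.
  by rewrite mulrC; exact: colon_f.
case=> r ->; exists (size H), (fun i => (r * H`_i)%:F), (fun i => u i).
split; last split.
- move=> i; exists (r * H`_i); split=> //; apply/IH.
  by case: (ideal_span_ideal H) => _ _; apply; apply/ideal_span_mem/mem_nth.
- by move=> i; exact: u_colon.
- rewrite -[LHS]mulr1 -sum_uH mulr_sumr; apply: eq_bigr => i _.
  by rewrite tofracM mulrAC mulrA.
Qed.

Lemma dual_basis_cons a t u (w : nat -> nat -> {fraction R}) :
  dual_basis t u -> (forall j, (j < size t)%N -> dual_basis [:: a; t`_j] (w j)) ->
  exists v, dual_basis (a :: t) v.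
Proof.
move=> [sum_ut ut_R] w_dual.
have uw_R j i h : (j < size t)%N -> (i < 2)%N -> h \in a :: t ->
    inR (u j * (t`_j)%:F * w j i * h%:F).
  move=> lt_j_t lt_i2; have [_ w_R] := w_dual j lt_j_t; have tj := mem_nth 0 lt_j_t.
  rewrite inE => /predU1P[->|ht].
    by rewrite -mulrA; apply: inRM; [apply: ut_R | apply: w_R; rewrite ?mem_head].
  have -> : u j * (t`_j)%:F * w j i * h%:F = u j * h%:F * (w j i * (t`_j)%:F) by ring.
  by apply: inRM; [exact: ut_R | apply: w_R; rewrite // !inE eqxx orbT].
pose v (k : nat) := if k is k'.+1 then u k' * (t`_k')%:F * w k' 1%N
                    else \sum_(j < size t) u j * (t`_j)%:F * w j 0%N.
exists v; split=> [|[|k] lt_k h ha /=]; last exact: uw_R.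
- rewrite big_ord_recl /= mulr_suml -big_split /= -sum_ut; apply: eq_bigr => j _.
  have [+ _] := w_dual j (ltn_ord j); rewrite !big_ord_recl big_ord0 addr0 /= => sum_w.
  by rewrite -[RHS]mulr1 -sum_w /bump /=; ring.
- by rewrite mulr_suml; apply: inR_sum => j _; apply: uw_R.
Qed.

Lemma dual_basis_of_pairs (P : R -> Prop) :
  (forall a b, P a -> P b -> a != 0 -> b != 0 -> exists u, dual_basis [:: a; b] u) ->
  forall H, H != [::] -> (forall h, h \in H -> P h /\ h != 0) -> exists u, dual_basis H u.
Proof.
move=> pair_dual; elim=> [//|a t IHt] _ HP.
have [Pa a0] := HP a (mem_head a t).
have tP h : h \in t -> P h /\ h != 0 by move=> ht; apply: HP; rewrite inE ht orbT.
case: t IHt tP {HP} => [_ _|b t' IHt tP].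
  exists (fun=> (a%:F)^-1); split; first by rewrite big_ord1 mulVf ?tofrac_eq0.
  by move=> i _ h; rewrite inE => /eqP ->; rewrite mulVf ?tofrac_eq0 //; exact: inR1.
have [u t_dual] := IHt isT tP.
have pair_t (j : 'I_(size (b :: t'))) : exists wj, dual_basis [:: a; (b :: t')`_j] wj.
  by have [Ptj tj0] := tP _ (mem_nth 0 (ltn_ord j)); exact: pair_dual.
have [w w_dual] := fin_all_exists pair_t.
apply: (dual_basis_cons (w := fun j => w (@inord (size t') j)) t_dual) => j lt_j.
by have := w_dual (inord j); rewrite inordK.
Qed.

End DualBases.

Section RatioOfSquares.
Variables (F : fieldType) (A B r s : F).
Hypotheses (A0 : A != 0) (B0 : B != 0) (E : A * B = r * A ^+ 2 + s * B ^+ 2).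

Lemma ratio_sqr_comb : s * B / A = 1 - r * A / B.
Proof.
have -> : 1 = (r * A ^+ 2 + s * B ^+ 2) / (A * B) by rewrite -E divff ?mulf_neq0.
by field; rewrite A0 B0.
Qed.

Lemma ratio_sqr_comb_quadratic : (r * A / B) ^+ 2 - r * A / B + r * s = 0.
Proof.
have -> : (r * A / B) ^+ 2 - r * A / B + r * s = r * s - r * A / B * (1 - r * A / B).
  by ring.
by rewrite -ratio_sqr_comb; field; rewrite A0 B0.
Qed.

End RatioOfSquares.

Section PairsOfSquares.
Variable R : idomainType.
Hypothesis Hic : integrally_closed R.
Variables a b : R.

Lemma mul_mem_v_closure_span_sqr :
  colon (colon (idealK (ideal_span [:: a ^+ 2; b ^+ 2]))) (a * b)%:F.
Proof.
move=> y y_colon.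
have [ya2 Ea] : inR (y * (a ^+ 2)%:F).
  by apply: y_colon; exists (a ^+ 2); split=> //; apply/ideal_span_mem/mem_head.
have [yb2 Eb] : inR (y * (b ^+ 2)%:F).
  apply: y_colon; exists (b ^+ 2); split=> //.
  by apply: ideal_span_mem; rewrite !inE eqxx orbT.
apply: (integrally_closed_quadratic (b := 0) (c := - (ya2 * yb2))) Hic _.
rewrite tofrac0 mul0r addr0 tofracN !tofracM -Ea -Eb !tofracXn; ring.
Qed.

Lemma dual_basis_of_mem_span_sqr :
  a != 0 -> b != 0 -> ideal_span [:: a ^+ 2; b ^+ 2] (a * b) ->
  exists u, dual_basis [:: a; b] u.
Proof.
move=> a0 b0 /ideal_span_pair [r [s Eab]].
have A0 : a%:F != 0 by rewrite tofrac_eq0.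
have B0 : b%:F != 0 by rewrite tofrac_eq0.
have E : a%:F * b%:F = r%:F * a%:F ^+ 2 + s%:F * b%:F ^+ 2.
  by move/(congr1 (@tofrac R)): Eab; rewrite tofracD !tofracM -!expr2 => ->.
pose y := r%:F * a%:F / b%:F.
have sBA : s%:F * b%:F / a%:F = 1 - y := ratio_sqr_comb A0 B0 E.
have y_R : inR y.
  apply: (integrally_closed_quadratic (b := -1) (c := r * s)) Hic _.
  rewrite tofracN tofrac1 tofracM mulN1r.
  exact: ratio_sqr_comb_quadratic A0 B0 E.
exists (fun i => if i is 0%N then r%:F / b%:F else s%:F / a%:F); split.
  by rewrite !big_ord_recl big_ord0 addr0 /= mulrAC [s%:F / _ * _]mulrAC -/y sBA addrC subrK.
case=> [|[|//]] _ h; rewrite !inE => /orP[] /eqP ->.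
- by rewrite mulrAC.
- by rewrite divfK //; exact: inR_tofrac.
- by rewrite divfK //; exact: inR_tofrac.
- by rewrite mulrAC sBA; apply: inRD; [exact: inR1 | exact/inRN].
Qed.

End PairsOfSquares.

Section Grading.
Variables (G : nmodType) (R : idomainType) (Rg : G -> R -> Prop).
Hypothesis HR : is_grading Rg.

Lemma grading0 a : Rg a 0. Proof. by case: HR. Qed.

Lemma gradingB a x y : Rg a x -> Rg a y -> Rg a (x - y).
Proof. by case: HR => _ HB _ _ _; exact: HB. Qed.

Lemma gradingD a x y : Rg a x -> Rg a y -> Rg a (x + y).
Proof.
move=> ax ay; have -> : x + y = x - (0 - y) by rewrite sub0r opprK.
by apply: gradingB => //; apply: gradingB => //; exact: grading0.
Qed.

Lemma gradingM a b x y : Rg a x -> Rg b y -> Rg (a + b) (x * y).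
Proof. by case: HR => _ _ HM _ _; exact: HM. Qed.

Lemma grading_sum a I (r : seq I) (P : pred I) (F : I -> R) :
  (forall i, P i -> Rg a (F i)) -> Rg a (\sum_(i <- r | P i) F i).
Proof. by move=> FR; apply: big_ind => //; [exact: grading0 | exact: gradingD]. Qed.

Lemma grading_decomposition x : exists (t : seq G) (f : G -> R),
  [/\ uniq t, forall a, Rg a (f a) & x = \sum_(a <- t) f a].
Proof. by case: HR => _ _ _ dec _; have [t [f [? [? ?]]]] := dec x; exists t, f. Qed.

Lemma grading_components_unique (S : seq G) (f g : G -> R) :
  uniq S -> (forall a, Rg a (f a)) -> (forall a, Rg a (g a)) ->
  \sum_(a <- S) f a = \sum_(a <- S) g a -> {in S, f =1 g}.
Proof.
move=> uS fR gR /eqP; rewrite -subr_eq0 -sumrB => /eqP sum0 a aS.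
apply/eqP; rewrite -subr_eq0; apply/eqP.
case: HR => _ _ _ _ direct; apply: (direct S (fun b => f b - g b)) => // b.
exact: gradingB.
Qed.

Lemma homogeneous_component_of_sum (I : eqType) (r : seq I) (e : I -> G) (w : I -> R)
    (t : seq G) (f : G -> R) :
  (forall k, Rg (e k) (w k)) -> uniq t -> (forall a, Rg a (f a)) ->
  \sum_(k <- r) w k = \sum_(a <- t) f a ->
  {in t, forall a, f a = \sum_(k <- r | e k == a) w k}.
Proof.
move=> wR ut fR sum_eq a a_t.
(* Both sides are homogeneous decompositions over the common set of degrees [S]. *)
pose S := undup (t ++ map e r).
have uS : uniq S := undup_uniq _.
have pick k : k \in r -> \sum_(b <- S | e k == b) w k = w k.
  move=> kr; have ekS : e k \in S by rewrite mem_undup mem_cat map_f ?orbT.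
  rewrite (big_rem (e k)) //= eqxx big_seq_cond big_pred0 ?addr0 // => b.
  rewrite (mem_rem_uniq _ uS) !inE; apply/negP => /andP[/andP[/eqP nb _] /eqP kb].
  exact: nb (esym kb).
pose ft b := if b \in t then f b else 0.
have sum_ft : \sum_(b <- S) ft b = \sum_(b <- t) f b.
  rewrite /ft -big_mkcond -big_filter; apply/perm_big/uniq_perm => //.
    exact: filter_uniq.
  by move=> b; rewrite mem_filter mem_undup mem_cat; case: (b \in t).
pose F b := \sum_(k <- r | e k == b) w k.
have sum_F : \sum_(b <- S) F b = \sum_(k <- r) w k.
  under eq_bigr => b _ do rewrite /F big_mkcond.
  rewrite exchange_big /=; apply: eq_big_seq => k kr; rewrite -big_mkcond; exact: pick.
have aS : a \in S by rewrite mem_undup mem_cat a_t.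
have := grading_components_unique uS (f := ft) (g := F) _ _ _ aS.
rewrite /ft a_t; apply.
- by move=> b; case: ifP => // _; exact: grading0.
- by move=> b; apply: grading_sum => k /eqP <-.
- by rewrite sum_ft -sum_eq sum_F.
Qed.

End Grading.

Section HomogeneousIdeals.
Variables (G : nmodType) (R : idomainType) (Rg : G -> R -> Prop).
Hypothesis HR : is_grading Rg.

Lemma homogeneous_ideal_span (s : seq R) :
  (forall h, h \in s -> exists a, Rg a h) -> homogeneous_ideal Rg (ideal_span s).
Proof.
move=> s_hom; split=> [|_ t f [c ->] ut fR sum_eq a a_t]; first exact: ideal_span_ideal.
have dec (i : 'I_(size s)) : exists p : G * (seq G * (G -> R)),
    [/\ Rg p.1 s`_i, uniq p.2.1, forall b, Rg b (p.2.2 b) & c i = \sum_(b <- p.2.1) p.2.2 b].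
  have [d sd] := s_hom _ (mem_nth 0 (ltn_ord i)).
  have [u [g [ug gR ci]]] := grading_decomposition HR (c i).
  by exists (d, (u, g)).
have [p pP] := fin_all_exists dec.
(* [x] as a sum of homogeneous terms [c_(i,b) * s_i], with [c_(i,b)] the degree-[b]
   component of [c i]. *)
pose K := [seq (i, b) | i <- index_enum 'I_(size s), b <- (p i).2.1].
pose e (k : 'I_(size s) * G) := k.2 + (p k.1).1.
pose w (k : 'I_(size s) * G) := (p k.1).2.2 k.2 * s`_(k.1).
have wR k : Rg (e k) (w k) by have [sd _ gR _] := pP k.1; exact: gradingM.
have sum_w : \sum_(k <- K) w k = \sum_(i < size s) c i * s`_i.
  rewrite big_allpairs_dep; apply: eq_bigr => i _.
  by have [_ _ _ ->] := pP i; rewrite mulr_suml.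
rewrite (homogeneous_component_of_sum HR (r := K) wR ut fR _ a_t); last by rewrite sum_w.
apply: ideal_sum => [|k _]; first exact: ideal_span_ideal.
case: (ideal_span_ideal s) => _ _; apply; exact/ideal_span_mem/mem_nth.
Qed.

Lemma homogeneous_ideal_generators (I : R -> Prop) (s : seq R) :
  homogeneous_ideal Rg I -> (forall x, x \in s -> I x) ->
  exists H : seq R, (forall h, h \in H -> [/\ I h, h != 0 & exists a, Rg a h]) /\
    forall x, x \in s -> ideal_span H x.
Proof.
case=> _ Icomp; elim: s => [|x s IHs] sI; first by exists [::].
have sI' y : y \in s -> I y by move=> ys; apply: sI; rewrite inE ys orbT.
have [H [HI sH]] := IHs sI'.
have [t [f [ut fR Ex]]] := grading_decomposition HR x.
pose Hx := [seq f b | b <- t & f b != 0].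
exists (Hx ++ H); split.
  move=> h; rewrite mem_cat => /orP[/mapP[b] | /HI //].
  rewrite mem_filter => /andP[fb0 bt] ->; split=> //; last by exists b.
  by apply: (Icomp x t f) => //; apply: sI; rewrite mem_head.
have span_cat y : ideal_span H y -> ideal_span (Hx ++ H) y.
  apply: ideal_span_min; first exact: ideal_span_ideal.
  by move=> z zH; apply: ideal_span_mem; rewrite mem_cat zH orbT.
move=> y; rewrite inE => /predU1P[->|/sH]; last exact: span_cat.
rewrite Ex big_seq; apply: ideal_sum => [|b bt]; first exact: ideal_span_ideal.
have [->|fb0] := eqVneq (f b) 0; first by case: (ideal_span_ideal (Hx ++ H)).
by apply: ideal_span_mem; rewrite mem_cat map_f // mem_filter fb0.
Qed.

Hypothesis Hic : integrally_closed R.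
Hypothesis Hv : forall I : R -> Prop, homogeneous_ideal Rg I -> nonzero_ideal I ->
  finitely_generated I -> v_ideal I.

Lemma homogeneous_pair_dual_basis a b :
  (exists al, Rg al a) -> (exists be, Rg be b) -> a != 0 -> b != 0 ->
  exists u, dual_basis [:: a; b] u.
Proof.
move=> [al a_al] [be b_be] a0 b0.
pose J := ideal_span [:: a ^+ 2; b ^+ 2].
have J_hom : homogeneous_ideal Rg J.
  apply: homogeneous_ideal_span => h; rewrite !inE => /orP[] /eqP ->.
    by exists (al + al); exact: gradingM.
  by exists (be + be); exact: gradingM.
have J_nz : nonzero_ideal J.
  by exists (a ^+ 2); split; [exact/ideal_span_mem/mem_head | rewrite expf_neq0].
have J_fg : finitely_generated J by exists [:: a ^+ 2; b ^+ 2].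
have ab_v := mul_mem_v_closure_span_sqr (a := a) (b := b) Hic.
have [r [Jr /eqP]] := (Hv J_hom J_nz J_fg ((a * b)%:F)).2 ab_v.
rewrite tofrac_eq => /eqP rE.
by apply: dual_basis_of_mem_span_sqr; rewrite // rE.
Qed.

End HomogeneousIdeals.

Unset Implicit Arguments.

Theorem corollary3p4 (G : nmodType) (R : idomainType) (Rg : G -> R -> Prop)
  (HGc : cancellative_monoid G) (HGt : torsionfree_quotient_group G)
  (HR : is_grading Rg) (Hic : integrally_closed R) :
  graded_Prufer Rg <->
  (forall I : R -> Prop, homogeneous_ideal Rg I -> nonzero_ideal I ->
     finitely_generated I -> v_ideal I).
Proof.
split=> [Hgp I I_hom I_nz I_fg | Hv I I_hom [x0 [Ix0 x0_nz]] [s Is]].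
  by apply: invertible_v_ideal; [case: I_hom | exact: Hgp].
have sI x : x \in s -> I x by move=> xs; apply/Is/ideal_span_mem.
have [H [HI sH]] := homogeneous_ideal_generators HR I_hom sI.
have IH : generated_by I H.
  move=> x; split=> [/Is | ]; first exact: ideal_span_min (ideal_span_ideal H) sH.
  by apply: ideal_span_min (proj1 I_hom) _ => h /HI[].
have H_nil : H != [::].
  by apply: contraNneq x0_nz => H0; apply/eqP/ideal_span_nil; rewrite -H0; exact/IH.
have H_hom h : h \in H -> (exists a, Rg a h) /\ h != 0 by case/HI.
have [u Hu] := dual_basis_of_pairs (homogeneous_pair_dual_basis HR Hic Hv) H_nil H_hom.
exact: invertible_of_dual_basis IH Hu.
Qed.
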